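(* For $i\in[s]$ let $p_i$ be a prime, $m_i\ge1$, $q_i=p_i^{m_i}$, $\omega_i$ a primitive $q_i$-th root of unity in $\mathbb C$, $k_i,r_i\ge0$, and $\alpha^{(i)}_t,\alpha^{(i)}_{t,j}\in\{0,\dots,q_i-1\}$ ($t\in[k_i]$, $j\in[r_i]$). Let $\mathcal P'$ be the CSP instance with pairwise distinct variables $x_{i,t}$ ($i\in[s],t\in[k_i]$) and $y_{i,j}$ ($i\in[s],j\in[r_i]$), where $x_{i,t},y_{i,j}$ take values in the set $U_{q_i}$ of $q_i$-th roots of unity, with constraints $x_{i,t}=\omega_i^{\alpha^{(i)}_t}\prod_{j=1}^{r_i}y_{i,j}^{\alpha^{(i)}_{t,j}}$. Let $$G'_i=\{x_{i,t}-\omega_i^{\alpha^{(i)}_t}\textstyle\prod_{j}y_{i,j}^{\alpha^{(i)}_{t,j}}:t\in[k_i]\}\cup\{y_{i,j}^{q_i}-1:j\in[r_i]\}.$$ Then $G'=\bigcup_{i=1}^sG'_i$ is a Gröbner basis for $\mathtt I(\mathcal P')=\mathbf I(\mathsf{Sol}(\mathcal P'))$ with respect to the lexicographic order $x_{1,1}\succ\dots\succ x_{1,k_1}\succ\dots\succ x_{s,1}\succ\dots\succ x_{s,k_s}\succ y_{1,1}\succ\dots\succ y_{1,r_1}\succ\dots\succ y_{s,1}\succ\dots\succ y_{s,r_s}$.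
   Context: $\mathsf{Sol}(\mathcal P')$ is the set of points (in $\mathbb C$ with each coordinate in its domain $U_{q_i}$) satisfying all constraints. $\mathtt I(\mathcal P')$ is the ideal generated by domain polynomials $z^{q_i}-1$ for each variable $z$ of sort $i$ and the constraint polynomials; $\mathbf I(S)$ is the ideal of polynomials vanishing on $S$. A Gröbner basis of $I$ is a finite $G\subseteq I$ with $\langle\mathrm{LT}(g):g\in G\rangle=\langle\mathrm{LT}(I)\rangle$. *)

From HB Require Import structures.
From mathcomp Require Import all_boot all_order all_algebra.
From mathcomp Require Import mpoly.

Set Implicit Arguments.
Unset Strict Implicit.
Unset Printing Implicit Defensive.

Import Order.TTheory GRing.Theory Num.Theory.
Local Open Scope ring_scope.

Section Generic.
Variables (F : fieldType) (n : nat).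

Definition mlexlt (m1 m2 : 'X_{1..n}) : bool :=
  [exists i : 'I_n, (m1 i < m2 i)%N &&
     [forall j : 'I_n, (j < i)%N ==> (m1 j == m2 j)]].

(* leading term (coefficient times monomial) w.r.t. lex; LT 0 = 0 *)
Definition LT (p : {mpoly F[n]}) : {mpoly F[n]} :=
  \sum_(m <- msupp p | all (fun m' => ~~ mlexlt m m') (msupp p))
     p@_m *: 'X_[m].

Definition ideal_gen (S : {mpoly F[n]} -> Prop) (f : {mpoly F[n]}) : Prop :=
  exists (gs cs : seq {mpoly F[n]}),
    (forall g, g \in gs -> S g) /\ size cs = size gs /\
    f = \sum_(i < size gs) cs`_i * gs`_i.

Definition vanishing_ideal (S : ('I_n -> F) -> Prop) (f : {mpoly F[n]}) : Prop :=
  forall v, S v -> f.@[v] = 0.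

Definition is_groebner (G : seq {mpoly F[n]}) (I : {mpoly F[n]} -> Prop) : Prop :=
  (forall g, g \in G -> I g) /\
  (forall f, ideal_gen (fun h => exists2 g, g \in G & h = LT g) f <->
             ideal_gen (fun h => exists2 g, I g & h = LT g) f).

End Generic.

Definition offset (s : nat) (f : 'I_s -> nat) (i : 'I_s) : nat :=
  (\sum_(j < s | (j < i)%N) f j)%N.

Lemma offset_lt (s : nat) (f : 'I_s -> nat) (i : 'I_s) (t : 'I_(f i)) :
  (offset f i + t < \sum_(j < s) f j)%N.
Proof.
rewrite /offset [X in (_ < X)%N](bigID (fun j : 'I_s => (j < i)%N)) /=.
rewrite ltn_add2l (bigD1 i) /= ?ltnn //.
by apply: (leq_trans (ltn_ord t)); apply: leq_addr.
Qed.

Section Vars.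
Variables (s : nat) (k r : 'I_s -> nat).

Definition nvars : nat := (\sum_(i < s) k i + \sum_(i < s) r i)%N.

Lemma xvar_lt (i : 'I_s) (t : 'I_(k i)) : (offset k i + t < nvars)%N.
Proof. exact: (leq_trans (offset_lt t) (leq_addr _ _)). Qed.

Lemma yvar_lt (i : 'I_s) (j : 'I_(r i)) :
  (\sum_(i0 < s) k i0 + (offset r i + j) < nvars)%N.
Proof. by rewrite /nvars ltn_add2l; exact: offset_lt. Qed.

(* x_{i,t} is variable number offset k i + t; y_{i,j} is variable number
   (sum of all k) + offset r i + j; so the lex order 'X_0 > 'X_1 > ...
   is exactly x_{1,1} > ... > x_{s,k_s} > y_{1,1} > ... > y_{s,r_s}. *)
Definition xvar (i : 'I_s) (t : 'I_(k i)) : 'I_nvars := Ordinal (xvar_lt t).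
Definition yvar (i : 'I_s) (j : 'I_(r i)) : 'I_nvars := Ordinal (yvar_lt j).

End Vars.

Section CSP.
Variables (F : fieldType) (s : nat) (q : 'I_s -> nat) (w : 'I_s -> F)
  (k r : 'I_s -> nat) (a : forall i : 'I_s, 'I_(k i) -> nat)
  (b : forall i : 'I_s, 'I_(k i) -> 'I_(r i) -> nat).

Local Notation n := (nvars k r).

Definition constr_poly (i : 'I_s) (t : 'I_(k i)) : {mpoly F[n]} :=
  'X_(xvar r t) - (w i ^+ a t)%:MP *
                  \prod_(j < r i) 'X_(yvar k j) ^+ b t j.

Definition domain_poly (i : 'I_s) (v : 'I_n) : {mpoly F[n]} :=
  'X_v ^+ q i - 1.

Definition CSP_gens (f : {mpoly F[n]}) : Prop :=
  (exists i (t : 'I_(k i)), f = domain_poly i (xvar r t)) \/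
  (exists i (j : 'I_(r i)), f = domain_poly i (yvar k j)) \/
  (exists i (t : 'I_(k i)), f = constr_poly t).

Definition CSP_ideal : {mpoly F[n]} -> Prop := ideal_gen CSP_gens.

Definition CSP_sol (v : 'I_n -> F) : Prop :=
  (forall i (t : 'I_(k i)), v (xvar r t) ^+ q i = 1) /\
  (forall i (j : 'I_(r i)), v (yvar k j) ^+ q i = 1) /\
  (forall i (t : 'I_(k i)),
      v (xvar r t) = w i ^+ a t * \prod_(j < r i) v (yvar k j) ^+ b t j).

Definition Gprime : seq {mpoly F[n]} :=
  [seq constr_poly t | i <- enum 'I_s, t <- enum 'I_(k i)] ++
  [seq domain_poly i (yvar k j) | i <- enum 'I_s, j <- enum 'I_(r i)].

End CSP.

(* Give every variable v the modulus Q v := q_i of its sort and write Sol(P')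
   for the solutions.  On the grid of points whose v-th coordinate is a Q v-th
   root of unity, a polynomial vanishing everywhere becomes 0 once each exponent
   is reduced modulo Q v: in one variable, a polynomial of degree < Q v with the
   Q v roots of unity as roots is 0, and an induction peels off one variable at
   a time.  Substituting the right-hand sides of the constraints for the x's maps
   f to a congruent polynomial h in the y's, whose values on the grid are those
   of f on Sol(P'); if f vanishes on Sol(P'), reducing h modulo the domain
   polynomials gives 0, so f is in I(P').
   For the Groebner basis property let m be a lex-leading monomial of g in I(P').
   If m contains some x_{i,t}, it is a multiple of the leading term x_{i,t} of a
   constraint.  Otherwise, the x's being the largest variables, no monomial of g
   contains an x, so g vanishes on the grid; if all exponents of m were below
   their moduli, reducing g would keep the coefficient of m, since every other
   monomial with the same residues is componentwise, hence lex, larger.  Thus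
   some y_{i,j}^{q_i}, the leading term of a domain polynomial, divides m. *)

From HB Require Import structures.
From mathcomp Require Import all_boot all_order all_algebra.
From mathcomp Require Import mpoly.
Import Order.TTheory GRing.Theory Num.Theory.
Local Open Scope ring_scope.

Set Implicit Arguments.
Unset Strict Implicit.
Unset Printing Implicit Defensive.

Section IdealSpan.
Variable R : comPzRingType.
Implicit Types (S : R -> Prop) (f g a b c d : R).

Definition in_ideal S f : Prop :=
  exists l : seq (R * R), (forall x, x \in l -> S x.2) /\
    f = \sum_(x <- l) x.1 * x.2.

Lemma in_ideal_gen S g : S g -> in_ideal S g.
Proof.
move=> Sg; exists [:: (1, g)]; rewrite big_seq1 mul1r; split=> // x.
by rewrite inE => /eqP ->.
Qed.

Lemma in_ideal0 S : in_ideal S 0.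
Proof. by exists [::]; rewrite big_nil. Qed.

Lemma in_idealD S f g : in_ideal S f -> in_ideal S g -> in_ideal S (f + g).
Proof.
case=> [l1 [S1 ->]] [l2 [S2 ->]]; exists (l1 ++ l2); rewrite big_cat.
by split=> // x; rewrite mem_cat => /orP[/S1|/S2].
Qed.

Lemma in_idealMl S g f : in_ideal S f -> in_ideal S (g * f).
Proof.
case=> l [Sl ->]; exists [seq (g * x.1, x.2) | x <- l]; split.
  by move=> y /mapP[x xl ->]; exact: Sl _ xl.
by rewrite big_map mulr_sumr; apply: eq_bigr => x _; rewrite mulrA.
Qed.

Lemma in_ideal_sum S (I : Type) (r : seq I) (P : pred I) (F : I -> R) :
  (forall i, P i -> in_ideal S (F i)) -> in_ideal S (\sum_(i <- r | P i) F i).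
Proof. by move=> SF; apply: big_ind => //; [exact: in_ideal0 | exact: in_idealD]. Qed.

Lemma in_ideal_sub S1 S2 f :
  (forall g, S1 g -> in_ideal S2 g) -> in_ideal S1 f -> in_ideal S2 f.
Proof.
move=> S12 [l [Sl ->]]; rewrite big_seq; apply: in_ideal_sum => x xl.
by apply: in_idealMl; apply/S12/Sl.
Qed.

Definition eqmod S a b : Prop := in_ideal S (a - b).

Lemma eqmod_refl S a : eqmod S a a.
Proof. by rewrite /eqmod subrr; exact: in_ideal0. Qed.

Lemma eqmod_trans S a b c : eqmod S a b -> eqmod S b c -> eqmod S a c.
Proof. by move=> ab bc; have := in_idealD ab bc; rewrite addrA subrK. Qed.

Lemma eqmodD S a b c d : eqmod S a b -> eqmod S c d -> eqmod S (a + c) (b + d).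
Proof. by move=> ab cd; rewrite /eqmod opprD addrACA; exact: in_idealD. Qed.

Lemma eqmodM S a b c d : eqmod S a b -> eqmod S c d -> eqmod S (a * c) (b * d).
Proof.
move=> ab cd; rewrite /eqmod -[a * c](subrK (b * c)) -mulrBl -addrA -mulrBr.
by rewrite mulrC; apply: in_idealD; apply: in_idealMl.
Qed.

Lemma eqmodX S a b e : eqmod S a b -> eqmod S (a ^+ e) (b ^+ e).
Proof.
move=> ab; elim: e => [|e IH]; first exact: eqmod_refl.
by rewrite !exprS; exact: eqmodM.
Qed.

Lemma eqmod_sum S (I : Type) (r : seq I) (P : pred I) (F1 F2 : I -> R) :
  (forall i, P i -> eqmod S (F1 i) (F2 i)) ->
  eqmod S (\sum_(i <- r | P i) F1 i) (\sum_(i <- r | P i) F2 i).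
Proof. by move=> E; apply: big_ind2 => //; [exact: eqmod_refl | exact: eqmodD]. Qed.

Lemma eqmod_prod S (I : Type) (r : seq I) (P : pred I) (F1 F2 : I -> R) :
  (forall i, P i -> eqmod S (F1 i) (F2 i)) ->
  eqmod S (\prod_(i <- r | P i) F1 i) (\prod_(i <- r | P i) F2 i).
Proof. by move=> E; apply: big_ind2 => //; [exact: eqmod_refl | exact: eqmodM]. Qed.

End IdealSpan.

Section PolyIdeal.
Variables (F : fieldType) (n : nat).
Local Notation R := {mpoly F[n]}.
Implicit Types (S : R -> Prop) (f g : R) (m : 'X_{1..n}).

Lemma ideal_genE S f : ideal_gen S f <-> in_ideal S f.
Proof.
have sum_zip (cs gs : seq R) : size cs = size gs ->
    \sum_(x <- zip cs gs) x.1 * x.2 = \sum_(i < size gs) cs`_i * gs`_i.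
  move=> eq_size; rewrite (big_nth (0, 0)) size_zip eq_size minnn big_mkord.
  by apply: eq_bigr => i _; rewrite nth_zip.
split=> [[gs [cs [Sgs [eq_size ->]]]] | [l [Sl ->]]].
  exists (zip cs gs); rewrite sum_zip //; split=> // x /(nthP (0, 0))[i].
  rewrite size_zip eq_size minnn => lt_i <-; rewrite nth_zip //.
  by apply: Sgs; rewrite mem_nth.
exists (unzip2 l), (unzip1 l); rewrite -sum_zip ?size_map // zip_unzip.
by split=> // y /mapP[x xl ->]; exact: Sl _ xl.
Qed.

Lemma eqmodZ S c f g : eqmod S f g -> eqmod S (c *: f) (c *: g).
Proof. by rewrite /eqmod -scalerBr -mul_mpolyC; exact: in_idealMl. Qed.

Lemma comp_mpoly_eqmod S f (lq : n.-tuple R) :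
  (forall i, eqmod S 'X_i (tnth lq i)) -> eqmod S f (f \mPo lq).
Proof.
move=> Xlq; rewrite comp_mpolyEX [f in eqmod _ f _]mpolyE.
apply: eqmod_sum => m _; apply: eqmodZ; rewrite comp_mpolyX mpolyXE_id.
by apply: eqmod_prod => i _; exact: eqmodX.
Qed.

Lemma in_ideal_meval S f (x : 'I_n -> F) :
  (forall g, S g -> g.@[x] = 0) -> in_ideal S f -> f.@[x] = 0.
Proof.
move=> S0 [l [Sl ->]]; rewrite big_seq rmorph_sum big1 // => y yl.
by rewrite rmorphM /= (S0 _ (Sl _ yl)) mulr0.
Qed.

Lemma in_ideal_lem S m m' : (m' <= m)%MM -> in_ideal S 'X_[m'] -> in_ideal S 'X_[m].
Proof. by move=> le_m'm /(in_idealMl 'X_[m - m']); rewrite -mpolyXD submK. Qed.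

Lemma meval_eq_supp g (u u' : 'I_n -> F) :
  (forall m i, m \in msupp g -> m i != 0%N -> u i = u' i) -> g.@[u] = g.@[u'].
Proof.
move=> eq_supp; rewrite !mevalE; apply: eq_big_seq => m m_supp; congr (_ * _).
apply: eq_bigr => i _.
by have [->|/(eq_supp _ _ m_supp)->] := eqVneq (m i) 0%N; rewrite ?expr0.
Qed.

End PolyIdeal.

Section Lex.
Variable n : nat.
Implicit Types m : 'X_{1..n}.

Lemma mlexlt_asym m1 m2 : mlexlt m1 m2 -> ~~ mlexlt m2 m1.
Proof.
case/existsP=> i /andP[lt12 /forallP eq12]; apply/existsP=> -[j /andP[lt21 /forallP eq21]].
case: (ltngtP i j) => [ij|ji|/val_inj ij].
- by move/implyP/(_ ij)/eqP: (eq21 i) lt12 => ->; rewrite ltnn.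
- by move/implyP/(_ ji)/eqP: (eq12 j) lt21 => ->; rewrite ltnn.
- by move: lt12; rewrite ij => /(ltn_trans lt21); rewrite ltnn.
Qed.

Lemma mlexlt_first m m' :
  m != m' ->
  (forall i : 'I_n, (forall j : 'I_n, (j < i)%N -> m j = m' j) ->
     m i != m' i -> (m i < m' i)%N) ->
  mlexlt m m'.
Proof.
move=> neq first; have [i0 ne_i0] : exists i, m i != m' i.
  by apply/existsP; apply: contraR neq => /existsPn eqm; apply/eqP/mnmP => i; apply/eqP/negbNE.
case: (arg_minnP (fun i : 'I_n => val i) (ne_i0 : (fun i => m i != m' i) i0)) => i ne_i min_i.
have eq_before (j : 'I_n) : (j < i)%N -> m j = m' j.
  by move=> lt_ji; apply/eqP; apply: contraTT lt_ji => /min_i; rewrite -leqNgt.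
apply/existsP; exists i; rewrite first //=.
by apply/forallP=> j; apply/implyP=> /eq_before ->.
Qed.

Lemma mlexlt_lem m m' : (m <= m')%MM -> m != m' -> mlexlt m m'.
Proof.
move=> /mnm_lepP le_mm' neq; apply: mlexlt_first => // i _.
by rewrite ltn_neqAle le_mm' andbT.
Qed.

Lemma mlexlt_prefix (K : nat) m m' (i : 'I_n) :
  (forall j : 'I_n, (j < K)%N -> m j = 0%N) -> (i < K)%N -> m' i != 0%N ->
  mlexlt m m'.
Proof.
move=> m_prefix lt_iK m'i; apply: mlexlt_first => [|j eq_before ne_j].
  by apply: contra_neq m'i => <-; rewrite m_prefix.
have lt_jK : (j < K)%N.
  rewrite ltnNge; apply/negP=> le_Kj; move/eqP: m'i; apply.
  by rewrite -eq_before ?m_prefix // (leq_trans lt_iK).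
by rewrite m_prefix // lt0n eq_sym -(m_prefix j lt_jK).
Qed.

Variable F : fieldType.
Implicit Types p g : {mpoly F[n]}.

Lemma LT_maxE p M :
  p@_M != 0 -> (forall m, m != M -> p@_m != 0 -> mlexlt m M) ->
  LT p = p@_M *: 'X_[M].
Proof.
move=> pM max_M; have M_supp : M \in msupp p by rewrite mcoeff_msupp.
rewrite /LT (big_rem M) //= big1_seq ?addr0 => [|m /andP[max_m]].
  rewrite ifT //; apply/allP => m m_supp; have [->|neq] := eqVneq m M.
    by apply/negP=> /[dup] /mlexlt_asym/negP.
  by apply/mlexlt_asym/max_M; rewrite // -mcoeff_msupp.
rewrite (mem_rem_uniq _ (msupp_uniq p)) => /andP[/= neq m_supp].
by move/allP: max_m => /(_ M M_supp); rewrite max_M // -mcoeff_msupp.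
Qed.

Lemma in_ideal_LT (S : {mpoly F[n]} -> Prop) g :
  (forall m, m \in msupp g -> all (fun m' => ~~ mlexlt m m') (msupp g) ->
     in_ideal S 'X_[m]) ->
  in_ideal S (LT g).
Proof.
move=> lead_in; rewrite /LT big_seq_cond; apply: in_ideal_sum => m /andP[m_supp max_m].
by rewrite -mul_mpolyC; apply/in_idealMl/lead_in.
Qed.

Lemma LT_Xn_sub1 (v : 'I_n) (e : nat) :
  (0 < e)%N -> LT ('X_v ^+ e - 1 : {mpoly F[n]}) = 'X_v ^+ e.
Proof.
move=> e_gt0; have Me : (U_(v) *+ e)%MM v = e by rewrite mulmnE mnm1E eqxx mul1n.
have Me0 : (U_(v) *+ e == 0)%MM = false.
  by apply/negbTE; apply: contraTneq e_gt0 => Me0; rewrite -Me Me0 mnm0E.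
rewrite mpolyXn (LT_maxE (M := (U_(v) *+ e)%MM)).
- by rewrite mcoeffB mcoeffX mcoeff1 eqxx Me0 subr0 scale1r.
- by rewrite mcoeffB mcoeffX mcoeff1 eqxx Me0 subr0 oner_neq0.
move=> m ne_m; rewrite mcoeffB mcoeffX mcoeff1 [_ == m]eq_sym (negbTE ne_m) sub0r oppr_eq0.
have [-> _|] := eqVneq m 0%MM; last by rewrite eqxx.
apply: (mlexlt_prefix (K := v.+1) (i := v)) => // [j _|]; first exact: mnm0E.
by rewrite Me -lt0n.
Qed.

Lemma LT_X_subZ (v : 'I_n) (c : F) m :
  (forall j : 'I_n, (j <= v)%N -> m j = 0%N) -> LT ('X_v - c *: 'X_[m]) = 'X_v.
Proof.
move=> m_prefix; have m_ne : (m == U_(v))%MM = false.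
  by apply/negbTE/eqP => /mnmP/(_ v); rewrite m_prefix // mnm1E eqxx.
rewrite (LT_maxE (M := U_(v)%MM)).
- by rewrite mcoeffB mcoeffZ !mcoeffX eqxx m_ne mulr0 subr0 scale1r.
- by rewrite mcoeffB mcoeffZ !mcoeffX eqxx m_ne mulr0 subr0 oner_neq0.
move=> m' ne_m'; rewrite mcoeffB mcoeffZ !mcoeffX [_ == m']eq_sym (negbTE ne_m') sub0r oppr_eq0.
have [<- _|] := eqVneq m m'; last by rewrite mulr0 eqxx.
by apply: (mlexlt_prefix (K := v.+1) (i := v)) => //; rewrite mnm1E eqxx.
Qed.

End Lex.

Lemma poly_unity_roots_eq0 (F : idomainType) (N : nat) (z : F) (P : {poly F}) :
  N.-primitive_root z -> (size P <= N)%N -> (forall t, t ^+ N = 1 -> P.[t] = 0) ->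
  P = 0.
Proof.
move=> prim_z size_P P_roots.
apply: (@roots_geq_poly_eq0 _ _ [seq z ^+ j | j <- iota 0 N]).
- apply/allP=> _ /mapP[j _ ->]; apply/rootP/P_roots.
  by rewrite exprAC (prim_expr_order prim_z) expr1n.
- rewrite map_inj_in_uniq ?iota_uniq // => i j; rewrite !mem_iota /= => lt_i lt_j.
  by move/eqP; rewrite (eq_prim_root_expr prim_z) !modn_small // => /eqP.
- by rewrite size_map size_iota.
Qed.

Section Grid.
Variables (F : fieldType) (n : nat) (Q : 'I_n -> nat) (z : 'I_n -> F).
Hypothesis prim_z : forall i, (Q i).-primitive_root (z i).
Implicit Types (u : 'I_n -> F) (m : 'X_{1..n}) (M : seq 'X_{1..n}) (c : 'X_{1..n} -> F).

Lemma residue_class_sum_eq0 (v : 'I_n) u M c :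
  u v = 1 ->
  (forall t, t ^+ Q v = 1 ->
     \sum_(m <- M) c m * \prod_i (if i == v then t else u i) ^+ m i = 0) ->
  forall e, (e < Q v)%N ->
  \sum_(m <- M | (m v %% Q v)%N == e) c m * \prod_i u i ^+ m i = 0.
Proof.
move=> uv1 vanish e lt_e; have Qv_gt0 := prim_order_gt0 (prim_z v).
pose d l := \sum_(m <- M | (m v %% Q v)%N == l) c m * \prod_i u i ^+ m i.
suff /(congr1 (fun P : {poly F} => P`_e)) : \poly_(l < Q v) d l = 0.
  by rewrite coef_poly lt_e coef0.
apply: poly_unity_roots_eq0 (prim_z v) (size_poly _ _) _ => t tQ.
rewrite horner_poly -[RHS](vanish t tQ).
under eq_bigr do rewrite /d big_distrl big_mkcond /=.
rewrite exchange_big; apply: eq_bigr => m _.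
rewrite (bigD1 (Ordinal (ltn_pmod (m v) Qv_gt0))) //= eqxx [X in _ + X]big1 => [|j].
  rewrite addr0 [in RHS](bigD1 v) //= eqxx expr_mod // mulrAC -mulrA.
  rewrite (bigD1 v) //= uv1 expr1n mul1r; do 2 congr (_ * _).
  by apply: eq_bigr => i /negbTE ->.
move=> ne_j; rewrite ifF //; apply: contraNF ne_j => /eqP eq_j.
by apply/eqP/val_inj; rewrite /= eq_j.
Qed.

(* The coordinates outside [S] are frozen at 1, so that the induction can
   release the variables of [S] one at a time. *)
Lemma grid_residue_sum_eq0 (S : seq 'I_n) M c :
  uniq S ->
  (forall u, (forall i, i \in S -> u i ^+ Q i = 1) -> (forall i, i \notin S -> u i = 1) ->
     \sum_(m <- M) c m * \prod_i u i ^+ m i = 0) ->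
  forall m0, \sum_(m <- M | all (fun i => m i %% Q i == m0 i %% Q i)%N S) c m = 0.
Proof.
elim: S c => [|v S IH] c /=.
  move=> _ /(_ (fun=> 1)) vanish m0; rewrite -[RHS]vanish //.
  by apply: eq_bigr => m _; rewrite big1 ?mulr1 // => i _; rewrite expr1n.
case/andP=> vS uniqS vanish m0.
under eq_bigl do rewrite andbC.
rewrite big_mkcondr /=; apply: IH => // u uS u1.
under eq_bigr do rewrite (fun_if (fun x => x * _)) mul0r.
rewrite -big_mkcond /=.
apply: residue_class_sum_eq0; rewrite ?u1 ?ltn_pmod ?(prim_order_gt0 (prim_z v)) //.
move=> t tQ; apply: vanish => i; rewrite inE; case: eqVneq => [-> //|_ /=].
  exact: uS.
exact: u1.
Qed.

Definition mred m : 'X_{1..n} := [multinom (m i %% Q i)%N | i < n].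

Definition redp (h : {mpoly F[n]}) : {mpoly F[n]} :=
  \sum_(m <- msupp h) h@_m *: 'X_[mred m].

Lemma mred_idem m : mred (mred m) = mred m.
Proof. by apply/mnmP => i; rewrite !mnmE modn_mod. Qed.

Lemma mred_eq m m' :
  (mred m == mred m') = all (fun i => m i %% Q i == m' i %% Q i)%N (enum 'I_n).
Proof.
apply/eqP/allP => [/mnmP eq_red i _ | eq_mod]; first by move: (eq_red i); rewrite !mnmE => ->.
by apply/mnmP => i; rewrite !mnmE; apply/eqP/eq_mod; rewrite mem_enum.
Qed.

Lemma mcoeff_redp h m0 : (redp h)@_m0 = \sum_(m <- msupp h | mred m == m0) h@_m.
Proof.
rewrite raddf_sum [RHS]big_mkcond; apply: eq_bigr => m _ /=.
by rewrite mcoeffZ mcoeffX; case: eqP; rewrite ?mulr1 ?mulr0.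
Qed.

Lemma redp_eqmod (S : {mpoly F[n]} -> Prop) h :
  (forall i, eqmod S ('X_i ^+ Q i) 1) -> eqmod S h (redp h).
Proof.
move=> XQ1; rewrite [h in eqmod _ h _]mpolyE; apply: eqmod_sum => m _.
apply: eqmodZ; rewrite !mpolyXE_id; apply: eqmod_prod => i _.
rewrite mnmE {1}(divn_eq (m i) (Q i)) exprD mulnC exprM -[X in eqmod _ _ X]mul1r.
by apply: eqmodM; [rewrite -(expr1n _ (m i %/ Q i)); exact: eqmodX | exact: eqmod_refl].
Qed.

Lemma redp_eq0 h :
  (forall u, (forall i, u i ^+ Q i = 1) -> h.@[u] = 0) -> redp h = 0.
Proof.
move=> vanish; apply/mpolyP => m0; rewrite mcoeff_redp mcoeff0.
have [reduced | not_reduced] := eqVneq (mred m0) m0; last first.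
  rewrite big1 // => m /eqP red_m; case/eqP: not_reduced.
  by rewrite -red_m mred_idem.
rewrite (eq_bigl (fun m => mred m == mred m0)) => [|m]; last by rewrite reduced.
rewrite (eq_bigl _ _ (mred_eq^~ m0)).
apply: (grid_residue_sum_eq0 (enum_uniq _)) => u u_grid _.
by rewrite -mevalE; apply: vanish => i; rewrite u_grid ?mem_enum.
Qed.

Lemma grid_vanish_lead_reducible g m :
  (forall u, (forall i, u i ^+ Q i = 1) -> g.@[u] = 0) ->
  m \in msupp g -> all (fun m' => ~~ mlexlt m m') (msupp g) ->
  exists i, (Q i <= m i)%N.
Proof.
move=> vanish m_supp m_max; apply/existsP; apply: contraT => /existsPn small.
have red_m : mred m = m by apply/mnmP => i; rewrite mnmE modn_small // ltnNge small.
have := congr1 (mcoeff m) (redp_eq0 vanish); rewrite mcoeff_redp mcoeff0.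
rewrite (big_rem m) //= red_m eqxx big1_seq ?addr0 => [gm0|m' /andP[/eqP red_m']].
  by move: m_supp; rewrite mcoeff_msupp gm0 eqxx.
rewrite (mem_rem_uniq _ (msupp_uniq g)) => /andP[/= ne_m' m'_supp].
have lt_mm' : mlexlt m m'.
  apply: mlexlt_lem; last by rewrite eq_sym.
  by apply/mnm_lepP => i; rewrite -red_m' mnmE leq_mod.
by move/allP: m_max => /(_ m' m'_supp); rewrite lt_mm'.
Qed.

End Grid.

Section CSP.
Variables (F : fieldType) (s : nat) (q : 'I_s -> nat) (w : 'I_s -> F)
  (k r : 'I_s -> nat) (a : forall i : 'I_s, 'I_(k i) -> nat)
  (b : forall i : 'I_s, 'I_(k i) -> 'I_(r i) -> nat).
Hypothesis w_prim : forall i, (q i).-primitive_root (w i).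

Local Notation n := (nvars k r).
Local Notation nx := (\sum_(i < s) k i)%N.
Local Notation R := {mpoly F[n]}.
Local Notation gens := (CSP_gens q w a b).
Local Notation Sol := (CSP_sol q w a b).

Lemma ltn_xvar i (t : 'I_(k i)) : (xvar r t < nx)%N.
Proof. exact: offset_lt. Qed.

Lemma leq_yvar i (j : 'I_(r i)) : (nx <= yvar k j)%N.
Proof. exact: leq_addr. Qed.

Variant var_spec : 'I_n -> Type :=
  | XVar i (t : 'I_(k i)) : var_spec (xvar r t)
  | YVar i (j : 'I_(r i)) : var_spec (yvar k j).

Lemma varP v : var_spec v.
Proof.
have [l eq_v|h eq_v] := splitP v.
  have -> : v = xvar r (tagged (tagnat.sig l)).
    by apply: val_inj; rewrite /= eq_v [LHS]tagnat.rect.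
  exact: XVar.
have -> : v = yvar k (tagged (tagnat.sig h)).
  by apply: val_inj; rewrite /= eq_v [in LHS]tagnat.rect.
exact: YVar.
Qed.

Definition vdec (v : 'I_n) : {i : 'I_s & 'I_(k i)} + {i : 'I_s & 'I_(r i)} :=
  match split v with
  | inl l => inl (tagnat.sig l)
  | inr h => inr (tagnat.sig h)
  end.

Lemma vdec_xvar i (t : 'I_(k i)) : vdec (xvar r t) = inl (Tagged _ t).
Proof.
have -> : xvar r t = unsplit (inl (tagnat.Rank i t)) :> 'I_n.
  by apply: val_inj; exact: (esym (tagnat.RankEsum t)).
by rewrite /vdec unsplitK tagnat.rankK.
Qed.

Lemma vdec_yvar i (j : 'I_(r i)) : vdec (yvar k j) = inr (Tagged _ j).
Proof.
have -> : yvar k j = unsplit (inr (tagnat.Rank i j)) :> 'I_n.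
  by apply: val_inj; exact: (congr1 (addn nx) (esym (tagnat.RankEsum j))).
by rewrite /vdec unsplitK tagnat.rankK.
Qed.

Definition vsort (v : 'I_n) : 'I_s :=
  match vdec v with inl p => tag p | inr p => tag p end.

Definition vmod (v : 'I_n) : nat := q (vsort v).
Definition vroot (v : 'I_n) : F := w (vsort v).

Lemma vroot_prim v : (vmod v).-primitive_root (vroot v).
Proof. exact: w_prim. Qed.

Definition constr_rhs (p : {i : 'I_s & 'I_(k i)}) : R :=
  (w (tag p) ^+ a (tagged p))%:MP *
  \prod_(j < r (tag p)) 'X_(yvar k j) ^+ b (tagged p) j.

Definition xsubst (v : 'I_n) : R := if vdec v is inl p then constr_rhs p else 'X_v.

Lemma meval_constr_rhs (u : 'I_n -> F) p :
  (constr_rhs p).@[u] =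
    w (tag p) ^+ a (tagged p) * \prod_(j < r (tag p)) u (yvar k j) ^+ b (tagged p) j.
Proof.
rewrite mevalM mevalC rmorph_prod; congr (_ * _); apply: eq_bigr => j _.
by rewrite rmorphXn /= mevalXU.
Qed.

Lemma gens_constr i (t : 'I_(k i)) : gens (constr_poly w a b t).
Proof. by right; right; exists i, t. Qed.

Lemma gens_domain v : gens (domain_poly F q (vsort v) v).
Proof.
case: (varP v) => i x; rewrite /vsort ?vdec_xvar ?vdec_yvar /=.
  by left; exists i, x.
by right; left; exists i, x.
Qed.

Lemma xsubst_eqmod v : eqmod gens 'X_v (xsubst v).
Proof.
case: (varP v) => i x; rewrite /xsubst ?vdec_xvar ?vdec_yvar.
  exact/in_ideal_gen/gens_constr.
exact: eqmod_refl.
Qed.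

Lemma sol_xsubst (u : 'I_n -> F) :
  (forall v, u v ^+ vmod v = 1) -> Sol (fun v => (xsubst v).@[u]).
Proof.
move=> u_grid.
have xsubst_y i (j : 'I_(r i)) : (xsubst (yvar k j)).@[u] = u (yvar k j).
  by rewrite /xsubst vdec_yvar mevalXU.
have u_y i (j : 'I_(r i)) : u (yvar k j) ^+ q i = 1.
  by have := u_grid (yvar k j); rewrite /vmod /vsort vdec_yvar.
split; [|split] => i x; rewrite ?xsubst_y //.
  rewrite /xsubst vdec_xvar meval_constr_rhs /= exprMn exprAC (prim_expr_order (w_prim i)).
  by rewrite expr1n mul1r -prodrXl big1 // => j _; rewrite exprAC u_y expr1n.
rewrite /xsubst vdec_xvar meval_constr_rhs; congr (_ * _); apply: eq_bigr => j _.
by rewrite xsubst_y.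
Qed.

Lemma gens_vanish_sol g (x : 'I_n -> F) : gens g -> Sol x -> g.@[x] = 0.
Proof.
move=> gen_g [x_dom [y_dom constr]].
case: gen_g => [[i [t ->]] | [[i [j ->]] | [i [t ->]]]].
- by rewrite /domain_poly mevalB rmorphXn /= mevalXU meval1 x_dom subrr.
- by rewrite /domain_poly mevalB rmorphXn /= mevalXU meval1 y_dom subrr.
rewrite /constr_poly mevalB mevalXU (constr i t) (meval_constr_rhs x (Tagged _ t)).
exact: subrr.
Qed.

Lemma in_ideal_vanish_sol f : in_ideal gens f -> vanishing_ideal Sol f.
Proof. by move=> If x Sx; apply: in_ideal_meval If => g /gens_vanish_sol; apply. Qed.

Lemma vanishing_in_ideal f : vanishing_ideal Sol f -> in_ideal gens f.
Proof.
move=> f_vanish; pose h := f \mPo [tuple xsubst v | v < n].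
have f_h : eqmod gens f h.
  by apply: comp_mpoly_eqmod => v; rewrite tnth_mktuple; exact: xsubst_eqmod.
have h_red : eqmod gens h (redp vmod h).
  by apply: redp_eqmod => v; exact/in_ideal_gen/gens_domain.
have red0 : redp vmod h = 0.
  apply: (redp_eq0 vroot_prim) => u u_grid; rewrite comp_mpoly_meval.
  rewrite (@meval_eq _ _ _ (fun v => (xsubst v).@[u])) => [|v]; last by rewrite tnth_mktuple.
  exact/f_vanish/sol_xsubst.
by have := eqmod_trans f_h h_red; rewrite red0 /eqmod subr0.
Qed.

Lemma LT_constr i (t : 'I_(k i)) : LT (constr_poly w a b t) = 'X_(xvar r t).
Proof.
rewrite /constr_poly mul_mpolyC mprodXnE; apply: LT_X_subZ => v le_v.
rewrite mnm_sumE big1 // => j _; rewrite mulmnE mnm1E; case: eqP => [eq_v|_]; last exact: mul0n.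
by move: (leq_yvar j); rewrite eq_v leqNgt (leq_ltn_trans le_v (ltn_xvar t)).
Qed.

Lemma LT_domain v : LT (domain_poly F q (vsort v) v) = 'X_v ^+ vmod v.
Proof. exact/LT_Xn_sub1/(prim_order_gt0 (vroot_prim v)). Qed.

Lemma Gprime_constr i (t : 'I_(k i)) : constr_poly w a b t \in Gprime q w a b.
Proof. by rewrite mem_cat; apply/orP; left; apply/allpairsPdep; exists i, t; rewrite !mem_enum. Qed.

Lemma Gprime_domain i (j : 'I_(r i)) : domain_poly F q i (yvar k j) \in Gprime q w a b.
Proof. by rewrite mem_cat; apply/orP; right; apply/allpairsPdep; exists i, j; rewrite !mem_enum. Qed.

Lemma Gprime_gens g : g \in Gprime q w a b -> gens g.
Proof.
rewrite mem_cat => /orP[] /allpairsPdep[i [t [_ _ ->]]]; first exact: gens_constr.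
by right; left; exists i, t.
Qed.

Lemma xfree_lead_vanish_grid g m :
  vanishing_ideal Sol g -> m \in msupp g -> all (fun m' => ~~ mlexlt m m') (msupp g) ->
  (forall v : 'I_n, (v < nx)%N -> m v = 0%N) ->
  forall u, (forall v, u v ^+ vmod v = 1) -> g.@[u] = 0.
Proof.
move=> g_vanish m_supp m_max m_xfree u u_grid.
rewrite (@meval_eq_supp _ _ g u (fun v => (xsubst v).@[u])); first exact/g_vanish/sol_xsubst.
move=> m' v m'_supp; case: (varP v) => i x m'v.
  have : mlexlt m m' by apply: mlexlt_prefix m_xfree (ltn_xvar x) m'v.
  by move/allP: m_max => /(_ m' m'_supp) /negbTE ->.
by rewrite /xsubst vdec_yvar mevalXU.
Qed.

Definition LT_Gprime (h : R) : Prop := exists2 g, g \in Gprime q w a b & h = LT g.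

Lemma in_ideal_LT_Gprime g : in_ideal gens g -> in_ideal LT_Gprime (LT g).
Proof.
move=> Ig; apply: in_ideal_LT => m m_supp m_max.
case: (pickP (fun v : 'I_n => (v < nx)%N && (m v != 0%N))) => [v /andP[] | m_xfree].
  case: (varP v) => [i t _ mv | i j]; last by rewrite ltnNge leq_yvar.
  apply: (in_ideal_lem (m' := U_(xvar r t))); first by rewrite lep1mP.
  by apply: in_ideal_gen; exists (constr_poly w a b t); rewrite ?LT_constr ?Gprime_constr.
have {}m_xfree (v : 'I_n) : (v < nx)%N -> m v = 0%N.
  by move=> lt_v; apply/eqP; move: (m_xfree v); rewrite lt_v => /negbT; rewrite negbK.
have g_grid := xfree_lead_vanish_grid (in_ideal_vanish_sol Ig) m_supp m_max m_xfree.
have [v] := grid_vanish_lead_reducible vroot_prim g_grid m_supp m_max.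
case: (varP v) => [i t | i j] le_v.
  rewrite m_xfree ?ltn_xvar // in le_v.
  by move: (prim_order_gt0 (vroot_prim (xvar r t))); rewrite ltnNge le_v.
rewrite /vmod /vsort vdec_yvar /= in le_v.
apply: (in_ideal_lem (m' := U_(yvar k j) *+ q i)).
  by apply/mnm_lepP => l; rewrite mulmnE mnm1E; case: eqP => [<-|]; rewrite ?mul1n ?mul0n.
apply: in_ideal_gen; exists (domain_poly F q i (yvar k j)); first exact: Gprime_domain.
by have := LT_domain (yvar k j); rewrite /vmod /vsort vdec_yvar /= mpolyXn.
Qed.

End CSP.

Unset Implicit Arguments.

Theorem lemma5p5 (C : numClosedFieldType) (s : nat)
  (p m : 'I_s -> nat) (w : 'I_s -> C) (k r : 'I_s -> nat)
  (a : forall i : 'I_s, 'I_(k i) -> nat)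
  (b : forall i : 'I_s, 'I_(k i) -> 'I_(r i) -> nat) :
  (forall i, prime (p i)) ->
  (forall i, (0 < m i)%N) ->
  (forall i, (p i ^ m i)%N.-primitive_root (w i)) ->
  (forall i t, (a i t < p i ^ m i)%N) ->
  (forall i t j, (b i t j < p i ^ m i)%N) ->
  let q := fun i => (p i ^ m i)%N in
  (forall f, CSP_ideal q w a b f <-> vanishing_ideal (CSP_sol q w a b) f) /\
  is_groebner (Gprime q w a b) (CSP_ideal q w a b).
Proof.
move=> _ _ w_prim _ _ q.
have I_gens g : g \in Gprime q w a b -> CSP_ideal q w a b g.
  by move/Gprime_gens/in_ideal_gen/ideal_genE.
split=> [f | ].
  rewrite /CSP_ideal ideal_genE.
  by split; [exact: in_ideal_vanish_sol | exact: vanishing_in_ideal].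
split=> // f; rewrite !ideal_genE; split; apply: in_ideal_sub => _ [g Ig ->].
  by apply: in_ideal_gen; exists g => //; exact: I_gens.
by apply: (in_ideal_LT_Gprime w_prim); apply/ideal_genE.
Qed.
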